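(* Let $A=\{a_1,a_2,\ldots,a_k\}$ be a set of $k\ge1$ distinct positive integers, let $\tau$ be a permutation of $\{1,2,\ldots,k\}$, and let $A_{\tau(j)}=\{a_{\tau(1)},\ldots,a_{\tau(j)}\}$ for $j=1,\ldots,k$, with $A_{\tau(0)}=\emptyset$. Then the following are equivalent: (a) The elements of $A$ are pairwise co-prime (i.e. every $2$-element subset of $A$ has gcd $1$). (b) \[ 2|A|-1 = \left( 1 + 4 \sum_{d=1}^{\sup A} \mu(d)\, v(A,d)\,(v(A,d)-1) \right)^{1/2}. \] (c) \[ 2|A|-1 = \left( 1 + 8 \sum_{j=1}^k \sum_{d\mid a_{\tau(j)}} \mu(d)\, v(A_{\tau(j-1)},d) \right)^{1/2}. \]
   Context: $\sup A$ is the largest element of $A$. $\mu$ is the Möbius function. For a finite set $X$ of positive integers and a positive integer $d$, $v(X,d)$ is the number of multiples of $d$ in $X$ (so $v(\emptyset,d)=0$). *)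

From HB Require Import structures.
From mathcomp Require Import all_boot all_order all_algebra all_fingroup.
Set Implicit Arguments. Unset Strict Implicit. Unset Printing Implicit Defensive.
Import Order.TTheory GRing.Theory Num.Theory.

(* Möbius function: mu n = (-1)^(number of prime factors) if n is squarefree,
   0 if n has a square prime factor; mu 0 := 0 (never used, d >= 1). *)
Definition moebius (n : nat) : int :=
  if n == 0%N then 0%R
  else if all (fun p => logn p n <= 1)%N (primes n)
       then ((-1) ^+ size (primes n))%R
       else 0%R.

(* v(X,d): number of multiples of d in the finite set X (given as a
   duplicate-free sequence). *)
Definition v (X : seq nat) (d : nat) : nat := count (fun x => d %| x) X.

From HB Require Import structures.
From mathcomp Require Import all_boot all_order all_algebra all_fingroup.
From mathcomp Require Import zify.

Set Implicit Arguments.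
Unset Strict Implicit.
Unset Printing Implicit Defensive.

Import Order.TTheory GRing.Theory Num.Theory.

(** Both sums count coprime pairs.  Since [\sum_(d %| gcd(x, y)) mu d] is [1]
   when [x] and [y] are coprime and [0] otherwise, the sum in (b) is the number
   of ordered pairs of distinct indices with coprime values, and the inner sum
   of (c) at [j] counts the earlier [a_tau(i)] coprime to [a_tau(j)].  These
   counts reach their maxima [k(k-1)] and [k(k-1)/2] exactly when [A] is
   pairwise coprime, and the square roots in (b) and (c) turn the equalities
   [c = k(k-1)] into [2k - 1 = sqrt(1 + 4c)]. *)

Lemma moebius_prime_mul p e : prime p -> 0 < e -> ~~ (p %| e) ->
  (moebius (p * e) = - moebius e)%R.
Proof.
move=> p_pr e_gt0 p_ndvd_e; have p_gt0 := prime_gt0 p_pr.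
have pe_gt0 : 0 < p * e by rewrite muln_gt0 p_gt0.
have primes_pe : perm_eq (primes (p * e)) (p :: primes e).
  apply: uniq_perm; first exact: primes_uniq.
    by rewrite /= primes_uniq andbT mem_primes (negPf p_ndvd_e) !andbF.
  by move=> q; rewrite primesM // primes_prime // !inE.
rewrite /moebius (negPf (lt0n_neq0 pe_gt0)) (negPf (lt0n_neq0 e_gt0)).
rewrite (perm_size primes_pe) (perm_all _ primes_pe) /=.
have -> : logn p (p * e) <= 1.
  by rewrite lognM // logn_prime // eqxx logn_coprime // prime_coprime.
have -> : all (fun q => logn q (p * e) <= 1) (primes e) =
          all (fun q => logn q e <= 1) (primes e).
  apply: eq_in_all => q; rewrite mem_primes => /and3P [q_pr _ q_dvd_e].
  rewrite lognM // logn_prime //.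
  by case: eqP => [eq_qp|]; [rewrite -eq_qp q_dvd_e in p_ndvd_e | rewrite add0n].
by case: all; rewrite ?oppr0 // exprS mulN1r.
Qed.

Lemma moebius_sqr_dvd p d : prime p -> p ^ 2 %| d -> moebius d = 0%R.
Proof.
move=> p_pr p2_dvd_d; rewrite /moebius; case: eqP => // /eqP d_neq0.
have d_gt0 : 0 < d by rewrite lt0n.
have p_in_d : p \in primes d.
  by rewrite mem_primes p_pr d_gt0 (dvdn_trans (dvdn_exp _ _) p2_dvd_d).
have logn_ge2 : 2 <= logn p d by rewrite -pfactor_dvdn.
by case: ifP => // /allP /(_ _ p_in_d); rewrite leqNgt (leq_trans _ logn_ge2).
Qed.

Lemma perm_map_involution (T : eqType) (f : T -> T) (s : seq T) :
  uniq s -> {in s, forall x, f x \in s} -> {in s, involutive f} ->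
  perm_eq (map f s) s.
Proof.
move=> s_uniq f_s fK; apply: uniq_perm => //.
  by rewrite map_inj_in_uniq // => x y xs ys eq_f; rewrite -(fK x) // eq_f fK.
move=> x; apply/mapP/idP => [[y ys ->]|xs]; first exact: f_s.
by exists (f x); rewrite ?fK ?f_s.
Qed.

Section MoebiusSignReversal.

Variables (n p : nat).
Hypotheses (n_gt0 : 0 < n) (p_pr : prime p) (p_dvd_n : p %| n).

Let sqfree_divisors := [seq d <- divisors n | ~~ (p ^ 2 %| d)].

(* Multiplying or dividing by [p] pairs up the divisors of [n] not divisible by
   [p^2], and changes the sign of the Moebius function. *)
Let toggle d := if p %| d then d %/ p else p * d.

Lemma mem_sqfree_divisors d :
  d \in sqfree_divisors = (d %| n) && ~~ (p ^ 2 %| d).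
Proof. by rewrite mem_filter -dvdn_divisors // andbC. Qed.

Lemma toggle_sqfree_divisors d : d \in sqfree_divisors ->
  [/\ toggle d \in sqfree_divisors, toggle (toggle d) = d
    & moebius (toggle d) = (- moebius d)%R].
Proof.
rewrite mem_sqfree_divisors => /andP [d_dvd_n p2_ndvd_d].
have [d_gt0 p_gt0] : 0 < d /\ 0 < p by rewrite (dvdn_gt0 n_gt0) ?prime_gt0.
rewrite /toggle mem_sqfree_divisors; case: ifP => p_dvd_d.
  have def_d : d = p * (d %/ p) by rewrite mulnC divnK.
  have e_gt0 : 0 < d %/ p by rewrite divn_gt0 // dvdn_leq.
  have p_ndvd_e : ~~ (p %| d %/ p).
    by apply: contra p2_ndvd_d; rewrite {2}def_d expnS expn1 dvdn_pmul2l.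
  rewrite (negPf p_ndvd_e) -def_d; split=> //.
    rewrite (dvdn_trans (dvdn_div p_dvd_d) d_dvd_n) /=.
    by apply: contra p_ndvd_e; apply: dvdn_trans; rewrite dvdn_exp.
  by rewrite {2}def_d moebius_prime_mul // opprK.
have p_co_d : coprime p d by rewrite prime_coprime // p_dvd_d.
rewrite (dvdn_mulr d (dvdnn p)) mulKn // moebius_prime_mul ?p_dvd_d //.
by rewrite expnS expn1 dvdn_pmul2l // p_dvd_d Gauss_dvd // p_dvd_n d_dvd_n.
Qed.

Lemma sum_moebius_sqfree_divisors : (\sum_(d <- sqfree_divisors) moebius d = 0)%R.
Proof.
have toggle_perm : perm_eq (map toggle sqfree_divisors) sqfree_divisors.
  apply: perm_map_involution; first by rewrite filter_uniq ?divisors_uniq.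
    by move=> d /toggle_sqfree_divisors [].
  by move=> d /toggle_sqfree_divisors [].
suff sum_eq_opp : (\sum_(d <- sqfree_divisors) moebius d =
                  - \sum_(d <- sqfree_divisors) moebius d)%R by lia.
rewrite -{1}(perm_big _ toggle_perm) big_map -sumrN.
by apply: eq_big_seq => d /toggle_sqfree_divisors [].
Qed.

Lemma sum_moebius_divisors_pdiv : (\sum_(d <- divisors n) moebius d = 0)%R.
Proof.
rewrite -[RHS]sum_moebius_sqfree_divisors big_filter [RHS]big_mkcond /=.
by apply: eq_bigr => d _; case: ifP => // /negbFE /(moebius_sqr_dvd p_pr).
Qed.

End MoebiusSignReversal.

Local Open Scope ring_scope.

Lemma sum_moebius_divisors n : (0 < n)%N ->
  \sum_(d <- divisors n) moebius d = (n == 1)%N%:Z.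
Proof.
move=> n_gt0; case: (ltngtP n 1) => [|n_gt1|->]; first by rewrite ltnNge n_gt0.
  by rewrite (sum_moebius_divisors_pdiv n_gt0 (pdiv_prime n_gt1) (pdiv_dvd n)).
by rewrite (_ : divisors 1 = [:: 1%N]) // big_seq1.
Qed.

Lemma sum_moebius_dvd m x : (0 < m)%N ->
  \sum_(d <- divisors m) moebius d * (d %| x)%N%:Z = (coprime m x)%:Z.
Proof.
move=> m_gt0; have g_gt0 : (0 < gcdn m x)%N by rewrite gcdn_gt0 m_gt0.
transitivity (\sum_(d <- divisors m | (d %| x)%N) moebius d).
  rewrite [RHS]big_mkcond; apply: eq_bigr => d _.
  by case: (d %| x)%N; rewrite ?mulr1 ?mulr0.
rewrite -big_filter (perm_big (divisors (gcdn m x))) ?sum_moebius_divisors //.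
apply: uniq_perm; rewrite ?filter_uniq ?divisors_uniq // => d.
by rewrite mem_filter -!dvdn_divisors // dvdn_gcd andbC.
Qed.

Lemma count_sumE (T : Type) (P : pred T) (s : seq T) :
  count P s = (\sum_(x <- s) P x)%N.
Proof. by rewrite -sum1_count big_mkcond. Qed.

Lemma sum_moebius_v m s : (0 < m)%N ->
  \sum_(d <- divisors m) moebius d * (v s d)%:Z = (count (coprime m) s)%:Z.
Proof.
move=> m_gt0; rewrite /v.
under eq_bigr => d _ do rewrite count_sumE raddf_sum mulr_sumr.
rewrite count_sumE exchange_big raddf_sum.
by apply: eq_bigr => x _; rewrite sum_moebius_dvd.
Qed.

Lemma count_map_enum (I : finType) (T : Type) (P : pred I) (f : I -> T) (q : pred T) :
  count q [seq f i | i <- enum I & P i] = (\sum_(i | P i) q (f i))%N.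
Proof. by rewrite count_map count_sumE big_filter enumT. Qed.

Lemma sum_range_divisors m N (F : nat -> int) : (0 < m)%N -> (m <= N)%N ->
  \sum_(1 <= d < N.+1 | (d %| m)%N) F d = \sum_(d <- divisors m) F d.
Proof.
move=> m_gt0 le_mN; rewrite -big_filter; apply: perm_big.
apply: uniq_perm; rewrite ?filter_uniq ?divisors_uniq ?iota_uniq // => d.
rewrite mem_filter -dvdn_divisors // mem_index_iota.
apply/andP/idP => [[] //|d_dvd_m]; split=> //.
by rewrite (dvdn_gt0 m_gt0 d_dvd_m) ltnS (leq_trans (dvdn_leq m_gt0 d_dvd_m)).
Qed.

Lemma sum_card_offdiag (I : finType) (b : pred I) :
  (\sum_(i | b i) \sum_(j | i != j) b j = #|b| * #|b|.-1)%N.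
Proof.
rewrite -sum_nat_const; apply: eq_bigr => i b_i.
rewrite (cardD1 i) unfold_in b_i add1n /= -sum1_card big_mkcondr.
by apply: eq_bigl => j; rewrite eq_sym.
Qed.

Lemma v_mul_vB1 (I : finType) (f : I -> nat) d :
  (v [seq f i | i <- enum I] d)%:Z * ((v [seq f i | i <- enum I] d)%:Z - 1) =
  \sum_(i | (d %| f i)%N) (v [seq f j | j <- enum I & i != j] d)%:Z.
Proof.
have -> : v [seq f i | i <- enum I] d = #|[pred i | (d %| f i)%N]|.
  by rewrite /v count_map -sum1_count big_enum_cond sum1_card.
transitivity (#|[pred i | (d %| f i)%N]| * #|[pred i | (d %| f i)%N]|.-1)%N%:Z.
  by case: #|_| => [|c]; rewrite ?mul0r //= PoszM -addn1 PoszD addrK.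
rewrite -sum_card_offdiag raddf_sum; apply: eq_bigr => i _.
by rewrite /v count_map_enum.
Qed.

Lemma sum_moebius_v_offdiag (I : finType) (f : I -> nat) N :
  (forall i, 0 < f i)%N -> (forall i, f i <= N)%N ->
  \sum_(1 <= d < N.+1) moebius d * (v [seq f i | i <- enum I] d)%:Z
                                 * ((v [seq f i | i <- enum I] d)%:Z - 1) =
  (\sum_i \sum_(j | i != j) coprime (f i) (f j))%:Z.
Proof.
move=> f_gt0 f_le_N.
under [LHS]eq_bigr => d _ do rewrite -mulrA v_mul_vB1 mulr_sumr big_mkcond.
rewrite exchange_big raddf_sum; apply: eq_bigr => i _ /=.
by rewrite -big_mkcond sum_range_divisors // sum_moebius_v // count_map_enum.
Qed.

Lemma sum_pairs_eq_sum1P (I : finType) (P r : I -> pred I) :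
  (\sum_i \sum_(j | P i j) r i j = \sum_i \sum_(j | P i j) 1)%N <->
  (forall i j, P i j -> r i j).
Proof.
have le_pairs : (\sum_i \sum_(j | P i j) r i j <= \sum_i \sum_(j | P i j) 1
                 ?= iff [forall i, [forall (j | P i j), r i j]])%N.
  by apply: leqif_sum => i _; apply: leqif_sum => j _; case: (r i j).
split=> [/eqP | r_P]; first rewrite le_pairs.2.
  by move=> /forallP r_P i j P_ij; move/forallP/(_ j)/implyP: (r_P i); apply.
apply/eqP; rewrite le_pairs.2.
by apply/forallP=> i; apply/forallP=> j; apply/implyP; apply: r_P.
Qed.

Lemma sum_offdiag1 (I : finType) :
  (\sum_(i : I) \sum_(j | i != j) 1 = #|I| * #|I|.-1)%N.
Proof.
rewrite -sum_nat_const; apply: eq_bigr => i _.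
by rewrite sum1_card -(cardC1 i); apply: eq_card => j; rewrite !inE eq_sym.
Qed.

Lemma sum_ltn_ord1 k : (2 * \sum_(j < k) \sum_(i < k | (i < j)%N) 1 = k * k.-1)%N.
Proof.
have -> : (\sum_(j < k) \sum_(i < k | (i < j)%N) 1 = \sum_(j < k) j)%N.
  apply: eq_bigr => j _.
  by rewrite (big_ord_narrow (ltnW (ltn_ord j))) sum1_card card_ord.
rewrite -(big_mkord xpredT id) bin2_sum.
by elim: k => // k IHk; rewrite binS bin1 mulnDr IHk; case: k {IHk} => //= k; lia.
Qed.

Lemma perm_offdiag_ltnP k (tau : 'S_k) (r : rel 'I_k) : symmetric r ->
  (forall i j, i != j -> r i j) <->
  (forall j i : 'I_k, (i < j)%N -> r (tau j) (tau i)).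
Proof.
move=> r_sym; split=> [r_offdiag j i lt_ij | r_ltn i j].
  by apply: r_offdiag; rewrite (inj_eq perm_inj) -(inj_eq val_inj) gtn_eqF.
rewrite -(permKV tau i) -(permKV tau j) (inj_eq perm_inj).
case: (ltngtP ((tau^-1)%g i) ((tau^-1)%g j)) => [lt_ij|lt_ji|/val_inj->].
- by move=> _; rewrite r_sym r_ltn.
- by move=> _; apply: r_ltn.
- by move=> eq_ij; rewrite eqxx in eq_ij.
Qed.

Lemma natr_eq_sqrt (R : rcfType) (y x : nat) :
  (y%:R : R) = Num.sqrt x%:R <-> x = (y ^ 2)%N.
Proof.
split=> [y_sqrt | ->]; last by rewrite natrX sqrtr_sqr ger0_norm.
by apply/eqP; rewrite -(eqr_nat R) natrX y_sqrt sqr_sqrtr.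
Qed.

Lemma odd_eq_sqrt (R : rcfType) (k c : nat) : (0 < k)%N ->
  ((2 * k%:Z - 1)%:~R : R) = Num.sqrt (1 + c%:R) <-> c = (4 * (k * k.-1))%N.
Proof.
move=> k_gt0; have -> : 2 * k%:Z - 1 = (2 * k).-1%N by lia.
by rewrite pmulrn addrC natr1 natr_eq_sqrt; split=> ?; nia.
Qed.

Theorem theorem5p5 (R : rcfType) (k : nat) (a : 'I_k -> nat) (tau : 'S_k) :
  (0 < k)%N -> injective a -> (forall i, 0 < a i)%N ->
  let A : seq nat := [seq a i | i <- enum 'I_k] in
  let supA : nat := (\max_(i < k) a i)%N in
  (* A_{tau(j)} for the 0-based prefix length j: {a_tau(i) | i < j} *)
  let Atau (j : nat) : seq nat := [seq a (tau i) | i <- [seq i <- enum 'I_k | (nat_of_ord i < j)%N]] in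
  let cond_a := forall i j : 'I_k, i != j -> coprime (a i) (a j) in
  let cond_b :=
    ((2 * (size A)%:Z - 1)%:~R : R) =
    Num.sqrt (1 + 4 * (\sum_(1 <= d < supA.+1)
                 (moebius d * (v A d)%:Z * ((v A d)%:Z - 1)))%:~R) in
  let cond_c :=
    ((2 * (size A)%:Z - 1)%:~R : R) =
    Num.sqrt (1 + 8 * (\sum_(j < k) \sum_(d <- divisors (a (tau j)))
                 (moebius d * (v (Atau j) d)%:Z))%:~R) in
  (cond_a <-> cond_b) /\ (cond_a <-> cond_c).
Proof.
move=> k_gt0 _ a_gt0 A supA Atau cond_a cond_b cond_c.
have sizeA : size A = k by rewrite size_map size_enum_ord.
have sum_b := sum_moebius_v_offdiag a_gt0 (fun i => leq_bigmax i).
have sum_c : \sum_(j < k) \sum_(d <- divisors (a (tau j))) moebius d * (v (Atau j) d)%:Z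
             = (\sum_(j < k) \sum_(i < k | (i < j)%N) coprime (a (tau j)) (a (tau i)))%:Z.
  by rewrite raddf_sum; apply: eq_bigr => j _; rewrite sum_moebius_v // count_map_enum.
have coprime_sym_a : symmetric (fun i j => coprime (a i) (a j)).
  by move=> i j; rewrite coprime_sym.
rewrite /cond_b /cond_c sum_b sum_c sizeA !pmulrn -!natrM !odd_eq_sqrt //.
have /= pairs_a := sum_pairs_eq_sum1P (fun i j : 'I_k => i != j)
                                      (fun i j => coprime (a i) (a j)).
have /= pairs_tau := sum_pairs_eq_sum1P (fun j i : 'I_k => (i < j)%N)
                                        (fun j i => coprime (a (tau j)) (a (tau i))).
rewrite sum_offdiag1 card_ord in pairs_a.
split.
  apply: iff_trans (iff_sym pairs_a) _.
  by split=> [-> | /eqP]; rewrite ?eqn_pmul2l // => /eqP.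
apply: iff_trans (perm_offdiag_ltnP tau coprime_sym_a) _.
apply: iff_trans (iff_sym pairs_tau) _.
rewrite -(sum_ltn_ord1 k) mulnA.
by split=> [-> | /eqP]; rewrite ?eqn_pmul2l // => /eqP.
Qed.
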